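(* For every integer $n\ge 1$, the symmetric group $S_n$ is almost monomial.
   Context: A finite group $G$ is called almost monomial if for every two distinct complex irreducible characters $\chi$ and $\psi$ of $G$ there exist a subgroup $H\le G$ and a linear (degree one) character $\varphi$ of $H$ such that the induced character $\operatorname{Ind}_H^G\varphi$ contains $\chi$ (i.e. $\langle \operatorname{Ind}_H^G\varphi,\chi\rangle\neq 0$) and does not contain $\psi$ (i.e. $\langle \operatorname{Ind}_H^G\varphi,\psi\rangle=0$), where $\langle\,,\rangle$ is the usual inner product of class functions. *)

From HB Require Import structures.
From mathcomp Require Import all_boot all_order all_algebra all_fingroup all_solvable all_field all_character.
Set Implicit Arguments. Unset Strict Implicit. Unset Printing Implicit Defensive.
Import GRing.Theory Num.Theory.
Local Open Scope ring_scope.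

Definition almost_monomial (gT : finGroupType) (G : {group gT}) : Prop :=
  forall chi psi : 'CF(G),
    chi \in irr G -> psi \in irr G -> chi != psi ->
    exists (H : {group gT}) (phi : 'CF(H)),
      [/\ H \subset G, phi \is a linear_char,
          '['Ind[G] phi, chi] != 0 & '['Ind[G] phi, psi] = 0].

From mathcomp Require Import all_boot all_algebra all_fingroup all_solvable all_field all_character.
From mathcomp Require Import zify.
Set Implicit Arguments. Unset Strict Implicit. Unset Printing Implicit Defensive.

(* Read a permutation s as a Young tableau whose rows are the cycles of s, a
   point sitting in the column given by its position along its cycle.  Let
   R_s and C_s be the row and column stabilisers, and pi_s, sigma_s the
   characters induced from the trivial character of R_s and the sign of C_s.
   By Mackey, '[pi_s, sigma_t] != 0 iff some conjugate of C_t meets R_s in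
   even permutations only.  Since R_s and C_s meet trivially, pi_s and
   sigma_s share an irreducible constituent; if pi_s and sigma_t do, then for
   some y no transposition of R_s is conjugated by y into C_t, so y spreads
   each cycle of s over distinct columns of t and the shape of t is dominated
   by that of s.  Hence classes with a common such constituent
   coincide, and counting classes against irreducibles shows that every chi
   is the only common constituent of pi_s and sigma_s for some s: any other
   irreducible psi is missing from one of these two monomial characters. *)

Section CycleTableau.
Variable T : finType.
Implicit Types (s t : {perm T}) (x y : T).

Definition cycle_root s x : T := odflt x [pick y in porbit s x].

Definition cycle_pos s x : nat :=
  index x (traject s (cycle_root s x) #|porbit s x|).

Lemma pick_cycle_root s x : [pick y in porbit s x] = Some (cycle_root s x).
Proof. by rewrite /cycle_root; case: pickP => [//|/(_ x)]; rewrite porbit_id. Qed.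

Lemma cycle_root_porbit s x : cycle_root s x \in porbit s x.
Proof. by rewrite /cycle_root; case: pickP => [//|_]; rewrite porbit_id. Qed.

Lemma porbit_cycle_root s x : porbit s (cycle_root s x) = porbit s x.
Proof. by apply/eqP; rewrite eq_porbit_mem cycle_root_porbit. Qed.

Lemma eq_cycle_root s x y : porbit s x = porbit s y -> cycle_root s x = cycle_root s y.
Proof. by move=> exy; have := pick_cycle_root s y; rewrite -exy pick_cycle_root => -[]. Qed.

Lemma porbit_iter s x i : porbit s (iter i s x) = porbit s x.
Proof. by rewrite -permX porbit_perm. Qed.

Lemma iter_porbit_inj s x i j : i < #|porbit s x| -> j < #|porbit s x| ->
  iter i s x = iter j s x -> i = j.
Proof.
move=> ltix ltjx eqij; apply/eqP.
rewrite -(nth_uniq x _ _ (uniq_traject_porbit s x)) ?size_traject //.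
by rewrite !nth_traject // eqij.
Qed.

Lemma mem_traject_cycle_root s x : x \in traject s (cycle_root s x) #|porbit s x|.
Proof.
by rewrite -{1}porbit_cycle_root -porbit_traject porbit_cycle_root porbit_id.
Qed.

Lemma cycle_pos_lt s x : cycle_pos s x < #|porbit s x|.
Proof.
by rewrite -[X in _ < X](size_traject s (cycle_root s x)) index_mem mem_traject_cycle_root.
Qed.

Lemma iter_cycle_pos s x : iter (cycle_pos s x) s (cycle_root s x) = x.
Proof.
by rewrite -(nth_traject _ (cycle_pos_lt s x)) nth_index // mem_traject_cycle_root.
Qed.

Lemma cycle_pos_iter s x i :
  i < #|porbit s x| -> cycle_pos s (iter i s (cycle_root s x)) = i.
Proof.
move=> ltix; have eqyx := porbit_iter s (cycle_root s x) i.
rewrite porbit_cycle_root in eqyx.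
apply: (iter_porbit_inj (s := s) (x := cycle_root s x)); rewrite ?porbit_cycle_root //.
  by rewrite -eqyx cycle_pos_lt.
by have := iter_cycle_pos s (iter i s (cycle_root s x)); rewrite (eq_cycle_root eqyx).
Qed.

Lemma cycle_pos_inj s x y :
  porbit s x = porbit s y -> cycle_pos s x = cycle_pos s y -> x = y.
Proof.
move=> eqxy eq_pos.
by rewrite -(iter_cycle_pos s x) -(iter_cycle_pos s y) eq_pos (eq_cycle_root eqxy).
Qed.

Lemma card_cycle_pos_lt s x k :
  #|[set y | (porbit s y == porbit s x) && (cycle_pos s y < k)]| = minn k #|porbit s x|.
Proof.
set m := #|porbit s x|; pose cell (i : 'I_m) := iter i s (cycle_root s x).
have -> : [set y | (porbit s y == porbit s x) && (cycle_pos s y < k)] =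
          cell @: [set i : 'I_m | i < k].
  apply/setP=> y; rewrite inE; apply/andP/imsetP => [[/eqP eqyx ltyk] | [i]].
    have ltym : cycle_pos s y < m by rewrite /m -eqyx cycle_pos_lt.
    exists (Ordinal ltym); first by rewrite inE.
    by rewrite /cell /= -(eq_cycle_root eqyx) iter_cycle_pos.
  rewrite inE => ltik ->; rewrite /cell porbit_iter porbit_cycle_root.
  by rewrite cycle_pos_iter.
rewrite card_imset => [|i j /(congr1 (cycle_pos s))]; last first.
  by rewrite !cycle_pos_iter // => /val_inj.
rewrite -sum1dep_card; elim: m {cell} => [|m IHm]; first by rewrite big_ord0 minn0.
by rewrite big_mkcond big_ord_recr /= -big_mkcond /= IHm; case: ltnP; lia.
Qed.

(* The number of cells in the first k columns, i.e. a partial sum of the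
   conjugate of the cycle-type partition of s. *)
Definition ncells_lt s k := #|[set x | cycle_pos s x < k]|.

Lemma sum_porbits s (F : T -> nat) :
  \sum_x F x = \sum_(O in porbits s) \sum_(x | porbit s x == O) F x.
Proof. by rewrite (partition_big (porbit s) (mem (porbits s))) // => x _; apply: imset_f. Qed.

Lemma ncells_lt_porbits s k : ncells_lt s k = \sum_(O in porbits s) minn k #|O|.
Proof.
rewrite /ncells_lt -sum1dep_card big_mkcond (sum_porbits s) /=.
apply: eq_bigr => _ /imsetP[x _ ->]; rewrite -card_cycle_pos_lt -sum1dep_card.
by rewrite [RHS]big_mkcondr; apply: eq_bigr => y _.
Qed.

Lemma card_le_inj_lt (A : {pred T}) (f : T -> nat) k :
  {in A &, injective f} -> {in A, forall x, f x < k} -> #|A| <= k.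
Proof.
move=> injf ltfk; rewrite cardE -(size_map f) -[k in _ <= k](size_iota 0).
apply: uniq_leq_size => [|_ /mapP[x Ax ->]].
  by rewrite map_inj_in_uniq ?enum_uniq // => x y; rewrite !mem_enum; apply: injf.
by rewrite mem_iota ltfk // -mem_enum.
Qed.

Lemma ncells_lt_le s t (y : {perm T}) :
    (forall x, {in porbit s x &, injective (fun u => cycle_pos t (y u))}) ->
  forall k, ncells_lt t k <= ncells_lt s k.
Proof.
move=> injy k; rewrite [ncells_lt s k]ncells_lt_porbits /ncells_lt -sum1dep_card.
rewrite big_mkcond (reindex_inj (@perm_inj _ y)) (sum_porbits s) /=.
apply: leq_sum => _ /imsetP[x _ ->]; rewrite -big_mkcondr sum1dep_card leq_min.
apply/andP; split.
  apply: card_le_inj_lt (fun u => cycle_pos t (y u)) _ _ _ => [u v|u]; last first.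
    by rewrite inE => /andP[].
  rewrite !inE => /andP[/eqP equx _] /andP[/eqP eqvx _].
  by apply: injy; rewrite -eq_porbit_mem ?equx ?eqvx.
apply/subset_leq_card/subsetP => u; rewrite !inE => /andP[equx _].
by rewrite -eq_porbit_mem.
Qed.

Definition ncycles s k := #|[set O in porbits s | #|O| == k]|.

Definition ncycles_gt s k := #|[set O in porbits s | k < #|O|]|.

Lemma ncells_ltS s k : ncells_lt s k.+1 = ncells_lt s k + ncycles_gt s k.
Proof.
rewrite !ncells_lt_porbits /ncycles_gt -sum1dep_card big_mkcondr -big_split /=.
by apply: eq_bigr => O _; case: ltnP; lia.
Qed.

Lemma ncycles_gtS s k : ncycles_gt s k = ncycles s k.+1 + ncycles_gt s k.+1.
Proof.
rewrite /ncycles_gt -(cardsID [set O : {set T} | #|O| == k.+1]).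
by congr (_ + _); apply: eq_card => O; rewrite !inE; case: (_ \in _) => /=; lia.
Qed.

Lemma ncycles0 s : ncycles s 0 = 0.
Proof.
apply/eqP; rewrite cards_eq0; apply/eqP/setP => O; rewrite !inE.
by case: imsetP => //= -[x _ ->]; rewrite (negbTE (card_porbit_neq0 _ _)).
Qed.

Lemma eq_ncycles s t :
  (forall k, ncells_lt s k = ncells_lt t k) -> forall k, ncycles s k = ncycles t k.
Proof.
move=> eq_cells.
have eq_gt k : ncycles_gt s k = ncycles_gt t k.
  by have := eq_cells k.+1; rewrite !ncells_ltS eq_cells; lia.
case=> [|k]; first by rewrite !ncycles0.
by have := ncycles_gtS s k; have := ncycles_gtS t k; rewrite !eq_gt; lia.
Qed.

Lemma porbits_porbit s x : porbit s x \in porbits s.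
Proof. exact: imset_f. Qed.

Lemma cycle_pos_root s x : cycle_pos s (cycle_root s x) = 0.
Proof. by have := @cycle_pos_iter s x 0; rewrite lt0n card_porbit_neq0; apply. Qed.

Section ConjugateCycles.
Variables s t : {perm T}.
Hypothesis eq_ncycles_st : forall k, ncycles s k = ncycles t k.

Let cycles_of (r : {perm T}) k := enum [set O in porbits r | #|O| == k].

Let match_cycle (O : {set T}) :=
  nth set0 (cycles_of t #|O|) (index O (cycles_of s #|O|)).

Lemma size_cycles_of k : size (cycles_of t k) = size (cycles_of s k).
Proof. by rewrite -!cardE; apply: esym; apply: eq_ncycles_st. Qed.

Lemma match_cycleP O :
  O \in porbits s -> match_cycle O \in porbits t /\ #|match_cycle O| = #|O|.
Proof.
move=> sO; have : match_cycle O \in cycles_of t #|O|.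
  by rewrite mem_nth // size_cycles_of index_mem mem_enum inE sO /=.
by rewrite mem_enum inE => /andP[-> /eqP].
Qed.

Lemma match_cycle_inj : {in porbits s &, injective match_cycle}.
Proof.
move=> O1 O2 sO1 sO2 eqO.
have eq_card : #|O1| = #|O2|.
  by have [_ <-] := match_cycleP sO1; have [_ <-] := match_cycleP sO2; rewrite eqO.
have mem_cycles O : O \in porbits s -> O \in cycles_of s #|O|.
  by move=> sO; rewrite mem_enum inE sO /=.
have O1s := mem_cycles _ sO1; have O2s := mem_cycles _ sO2.
rewrite eq_card in O1s.
move: eqO; rewrite /match_cycle eq_card => /eqP.
rewrite nth_uniq ?enum_uniq ?size_cycles_of ?index_mem // => /eqP eq_index.
by rewrite -(nth_index set0 O1s) eq_index nth_index.
Qed.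

Let root x := odflt x [pick y in match_cycle (porbit s x)].

Lemma card_match_cycle x : #|match_cycle (porbit s x)| = #|porbit s x|.
Proof. by case: (match_cycleP (porbits_porbit s x)). Qed.

Lemma pick_match_cycle x : [pick y in match_cycle (porbit s x)] = Some (root x).
Proof.
rewrite /root; case: pickP => // none.
by have := card_porbit_neq0 s x; rewrite -card_match_cycle (eq_card0 none).
Qed.

Lemma porbit_root x : porbit t (root x) = match_cycle (porbit s x).
Proof.
have [tM _] := match_cycleP (porbits_porbit s x).
have := pick_match_cycle x; case: pickP => // z Mz [<-].
by case/imsetP: tM Mz => y _ ->; rewrite -eq_porbit_mem => /eqP.
Qed.

Lemma card_root x : #|porbit t (root x)| = #|porbit s x|.
Proof. by rewrite porbit_root card_match_cycle. Qed.

Lemma eq_root x y : porbit s x = porbit s y -> root x = root y.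
Proof. by move=> eqxy; have := pick_match_cycle y; rewrite -eqxy pick_match_cycle => -[]. Qed.

Let conj_map x := iter (cycle_pos s x) t (root x).

Lemma conj_mapS x : conj_map (s x) = t (conj_map x).
Proof.
have eq_sx : porbit s (s x) = porbit s x by rewrite -(porbit_iter s x 1).
have sx : s x = iter (cycle_pos s x).+1 s (cycle_root s x) by rewrite iterS iter_cycle_pos.
rewrite /conj_map (eq_root eq_sx) -iterS sx.
have := cycle_pos_lt s x; rewrite leq_eqVlt => /orP[/eqP last_pos | lt_pos].
  rewrite last_pos -{1}(porbit_cycle_root s x) iter_porbit cycle_pos_root.
  by rewrite -card_root iter_porbit.
by rewrite cycle_pos_iter.
Qed.

Lemma conj_map_inj : injective conj_map.
Proof.
move=> x1 x2 eq_map.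
have porbit_map x : porbit t (conj_map x) = match_cycle (porbit s x).
  by rewrite porbit_iter porbit_root.
have eq_x12 : porbit s x1 = porbit s x2.
  by apply: match_cycle_inj; rewrite ?imset_f // -!porbit_map eq_map.
apply: (cycle_pos_inj eq_x12); move: eq_map; rewrite /conj_map (eq_root eq_x12).
by apply: iter_porbit_inj; rewrite card_root ?cycle_pos_lt // -eq_x12 cycle_pos_lt.
Qed.

Lemma conjg_of_eq_ncycles : exists g : {perm T}, t = (s ^ g)%g.
Proof.
exists (perm conj_map_inj); apply/permP => z.
by rewrite -(permKV (perm conj_map_inj) z) permJ !permE conj_mapS.
Qed.

End ConjugateCycles.

End CycleTableau.

Import GRing.Theory Num.Theory.
Local Open Scope ring_scope.

Lemma cfdot_char_constt_neq0 (gT : finGroupType) (G : {group gT}) (phi psi : 'CF(G)) i :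
    phi \is a character -> psi \is a character ->
  i \in irr_constt phi -> i \in irr_constt psi -> '[phi, psi] != 0.
Proof.
move=> Nphi Npsi; rewrite !irr_consttE => phi_i psi_i.
have Nphi_j := Cnat_cfdot_char_irr _ Nphi; have Npsi_j := Cnat_cfdot_char_irr _ Npsi.
rewrite cfdot_char_r // (bigD1 i) //= lt0r_neq0 // ltr_wpDr ?sumr_ge0 //.
  by move=> j _; rewrite mulr_ge0 ?natr_ge0.
by rewrite mulr_gt0 // natr_gt0.
Qed.

Section YoungCharacters.
Variable T : finType.
Implicit Types (s t : {perm T}) (A B : {group {perm T}}).
Local Notation G := [set: {perm T}]%G.

Definition sign_mx (x : {perm T}) : 'M[algC]_1 := ((-1) ^+ odd_perm x)%:M.

Lemma sign_mx_repr : mx_repr G sign_mx.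
Proof.
split=> [|x y _ _]; first by rewrite /sign_mx odd_perm1.
by rewrite /sign_mx odd_permM signr_addb scalar_mxM.
Qed.

Definition cfSign : 'CF(G) := cfRepr (MxRepresentation sign_mx_repr).

Lemma cfSign_lin_char : cfSign \is a linear_char.
Proof. by apply/andP; split; [exact: cfRepr_char | rewrite cfRepr1]. Qed.

Lemma cfSignE x : cfSign x = (-1) ^+ odd_perm x.
Proof. by rewrite cfunE inE mulr1n mxtrace_scalar. Qed.

Lemma sum_sign_group A :
  \sum_(x in A) (-1) ^+ odd_perm x = ((A \subset ('Alt_T)%g) * #|A|)%:R :> algC.
Proof.
have [AAlt | /subsetPn[u Au]] := boolP (A \subset ('Alt_T)%g).
  rewrite mul1n -sumr_const; apply: eq_bigr => x Ax.
  by have := subsetP AAlt x Ax; rewrite Alt_even => /negbTE ->.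
rewrite Alt_even negbK mul0n => odd_u; set S := \sum_(x in A) _.
have S_opp : S = - S.
  rewrite {1}/S (reindex_inj (mulgI u)) /= -sumrN.
  apply: eq_big => [x | x _]; first by rewrite groupMl.
  by rewrite odd_permM odd_u addTb signrN.
have : S *+ 2 == 0 by rewrite mulr2n {1}S_opp addNr.
by rewrite mulrn_eq0 /= => /eqP.
Qed.

Lemma cfdot_Ind1_IndSign A B :
  '['Ind[G] (1 : 'CF(A)), 'Ind[G] ('Res[B] cfSign)] =
  (#|A| * #|B|)%:R^-1 *
    (\sum_(y in G) ((A :&: B :^ y^-1 \subset 'Alt_T)%g * #|(A :&: B :^ y^-1)%g|))%N%:R.
Proof.
have sum_signJ y : \sum_(x in A | (x ^ y)%g \in B) (-1) ^+ odd_perm x =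
    ((A :&: B :^ y^-1 \subset 'Alt_T)%g * #|(A :&: B :^ y^-1)%g|)%:R :> algC.
  by rewrite -sum_sign_group; apply: eq_bigl => x; rewrite inE mem_conjgV.
rewrite -Frobenius_reciprocity cfdotE natrM invfM -mulrA; congr (_ * _).
transitivity (\sum_(x in A) (#|B|%:R^-1 *
    \sum_(y in G) (if (x ^ y)%g \in B then (-1) ^+ odd_perm x else 0 : algC))^*).
  apply: eq_bigr => x Ax.
  rewrite cfun1E Ax mul1r cfResE ?subsetT // cfIndE ?subsetT //; congr ((_ * _)^*).
  apply: eq_bigr => y _; case: ifP => xyB; last by rewrite cfun0 // xyB.
  by rewrite cfResE ?subsetT // cfSignE odd_permJ.
rewrite -rmorph_sum -mulr_sumr exchange_big /=.
under eq_bigr do rewrite -big_mkcondr sum_signJ.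
by rewrite -natr_sum rmorphM fmorphV /= !conjC_nat.
Qed.

Lemma cfdot_Ind1_IndSign_neq0 A B :
  ('['Ind[G] (1 : 'CF(A)), 'Ind[G] ('Res[B] cfSign)] != 0) =
  [exists y, A :&: B :^ y^-1 \subset 'Alt_T]%g.
Proof.
rewrite cfdot_Ind1_IndSign mulf_eq0 invr_eq0 !pnatr_eq0 muln_eq0 !negb_or.
rewrite sum_nat_eq0 negb_forall -!lt0n !cardG_gt0 /=; congr (_ < _)%N.
apply: eq_card => y; rewrite !inE /= muln_eq0 negb_or eqb0 negbK -lt0n.
by rewrite cardG_gt0 andbT.
Qed.

Definition young (U : eqType) (f : T -> U) : {set {perm T}} :=
  [set g : {perm T} | [forall x, f (g x) == f x]].

Lemma group_set_young (U : eqType) (f : T -> U) : group_set (young f).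
Proof.
apply/group_setP; split=> [|g h]; first by rewrite inE; apply/forallP => x; rewrite perm1.
rewrite !inE => /forallP fg /forallP fh; apply/forallP => x.
by rewrite permM (eqP (fh _)) fg.
Qed.

Canonical young_group (U : eqType) (f : T -> U) := Group (group_set_young f).

Lemma tperm_young (U : eqType) (f : T -> U) u v : f u = f v -> tperm u v \in young f.
Proof. by move=> fuv; rewrite inE; apply/forallP => x; case: tpermP => [->|->|]; rewrite ?fuv. Qed.

Definition row_group s := young_group (porbit s).
Definition col_group s := young_group (cycle_pos s).

Definition row_char s := 'Ind[G] (1 : 'CF(row_group s)).
Definition col_char s := 'Ind[G] ('Res[col_group s] cfSign).

Lemma row_char_char s : row_char s \is a character.
Proof. by rewrite cfInd_char ?cfun1_char. Qed.

Lemma col_char_char s : col_char s \is a character.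
Proof. by rewrite cfInd_char ?lin_charW ?cfRes_lin_char ?cfSign_lin_char. Qed.

Lemma row_col_trivI s : (row_group s :&: col_group s = 1)%g.
Proof.
apply/trivgP/subsetP => g; rewrite !inE => /andP[/forallP rowg /forallP colg].
by apply/eqP/permP => x; rewrite perm1; apply: cycle_pos_inj; apply/eqP.
Qed.

Lemma cfdot_row_col_char s : '[row_char s, col_char s] != 0.
Proof.
rewrite cfdot_Ind1_IndSign_neq0; apply/existsP; exists 1%g.
by rewrite invg1 conjsg1 row_col_trivI sub1G.
Qed.

Lemma ncells_lt_le_cfdot s t :
  '[row_char s, col_char t] != 0 -> forall k, (ncells_lt t k <= ncells_lt s k)%N.
Proof.
rewrite cfdot_Ind1_IndSign_neq0 => /existsP[y /subsetP even_y].
apply: (ncells_lt_le (y := y)) => x u v su sv eq_pos; apply/eqP/negPn/negP => neq_uv.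
have : tperm u v \in (row_group s :&: col_group t :^ y^-1)%g.
  rewrite inE tperm_young ?mem_conjgV ?tpermJ ?tperm_young //.
  have /eqP -> : porbit s u == porbit s x by rewrite eq_porbit_mem.
  by apply/esym/eqP; rewrite eq_porbit_mem.
by move/even_y; rewrite Alt_even odd_tperm neq_uv.
Qed.

Lemma conjg_of_cfdot s t :
    '[row_char s, col_char t] != 0 -> '[row_char t, col_char s] != 0 ->
  exists g, t = (s ^ g)%g.
Proof.
move=> st ts; apply: conjg_of_eq_ncycles; apply: eq_ncycles => k.
by apply/eqP; rewrite eqn_leq ncells_lt_le_cfdot ?ncells_lt_le_cfdot.
Qed.

Definition young_constt s : {set Iirr G} :=
  [set i | (i \in irr_constt (row_char s)) && (i \in irr_constt (col_char s))].

Lemma young_constt_neq0 s : young_constt s != set0.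
Proof.
apply: contraTneq (cfdot_row_col_char s) => empty; rewrite negbK cfdot_sum_irr.
rewrite big1 // => i _; have : i \notin young_constt s by rewrite empty inE.
by rewrite inE negb_and !irr_consttE !negbK => /orP[]/eqP->; rewrite ?mul0r ?conjC0 ?mulr0.
Qed.

Lemma young_constt_conjg s t i :
  i \in young_constt s -> i \in young_constt t -> exists g, t = (s ^ g)%g.
Proof.
rewrite !inE => /andP[row_s col_s] /andP[row_t col_t].
by apply: conjg_of_cfdot; apply: cfdot_char_constt_neq0 (i) _ _ _ _;
  rewrite ?row_char_char ?col_char_char.
Qed.

Lemma young_constt_set1 i : exists s, young_constt s = [set i].
Proof.
pose constt_of (C : {set {perm T}}) := odflt 0 [pick j in young_constt (repr C)].
have constt_ofP C : constt_of C \in young_constt (repr C).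
  rewrite /constt_of; case: pickP => // empty.
  by have /set0Pn[j] := young_constt_neq0 (repr C); rewrite empty.
have eq_classes C D : C \in classes G -> D \in classes G ->
    constt_of D \in young_constt (repr C) -> C = D.
  move=> /repr_classesP[_ eqC] /repr_classesP[_ eqD] CD.
  have [g eqg] := young_constt_conjg CD (constt_ofP D).
  by rewrite eqC eqD eqg classGidl // inE.
have onto j : j \in constt_of @: classes G.
  (* there are as many irreducible characters as conjugacy classes *)
  suff -> : constt_of @: classes G = [set: Iirr G] by rewrite inE.
  apply/eqP; rewrite eqEcard subsetT cardsT card_in_imset ?card_ord ?NirrE ?leqnn //.
  by move=> C D CG DG eqCD; apply: eq_classes; rewrite // -eqCD constt_ofP.
have /imsetP[C CG ->] := onto i; exists (repr C); apply/eqP.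
rewrite eqEsubset sub1set constt_ofP andbT; apply/subsetP => j Cj; rewrite inE.
by have /imsetP[D DG eqj] := onto j; rewrite eqj (eq_classes C D) // -eqj.
Qed.

End YoungCharacters.

Theorem theorem2p1 (n : nat) : (1 <= n)%N -> almost_monomial [set: 'S_n]%G.
Proof.
move=> _ chi psi /irrP[i ->] /irrP[j ->] chi_neq_psi.
have [s constt_s] := young_constt_set1 i.
have : j \notin young_constt s.
  by rewrite constt_s inE; apply: contra chi_neq_psi => /eqP->.
have : i \in young_constt s by rewrite constt_s set11.
rewrite !inE => /andP[row_i col_i].
rewrite negb_and !negbK => /orP[/eqP row_j | /eqP col_j].
  exists (row_group s), 1; split=> //; [exact: subsetT | exact: cfun1_lin_char].
exists (col_group s), ('Res (cfSign _)); split=> //; first exact: subsetT.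
by rewrite cfRes_lin_char ?cfSign_lin_char.
Qed.
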